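(* Let $A$ be a dependent type over a type $\Gamma$. If $A$ has a homogeneous composition structure $h_A$ and a transport structure $t_A$, then $A$ has a composition structure. Explicitly, one may take $c_A\,\gamma\,\varphi\,u\,u_0 := h_A\,\gamma(1)\,\varphi\,\big(\lambda (x:[\varphi])(i:\mathbb I).\,t_A\,\gamma'(i)\,(i=1)\,(u\,x\,i)\big)\,\big(t_A\,\gamma\,0_{\mathbb F}\,u_0\big)$, where $\gamma'(i)=\lambda(j:\mathbb I).\,\gamma(i\vee j)$.
   Context: Standing setting: Let $\mathcal{C}$ be the category whose objects are finite sets $I,J,\dots$ of names (from a fixed countable set) and whose morphisms $f\colon J\to I$ are set maps $I\to \mathrm{dM}(J)$, where $\mathrm{dM}(J)$ is the free De Morgan algebra on $J$. We work in the internal extensional type theory (with universes) of the presheaf topos on $\mathcal{C}$. $\mathbb{I}$ denotes the presheaf $J\mapsto \mathrm{dM}(J)$, an internal De Morgan algebra with $0,1,\wedge,\vee$ and involution $r\mapsto 1-r$. $\mathbb{F}$ is the presheaf of cofibrant propositions, with $\mathbb{F}(I)$ the face lattice on $I$ (the distributive lattice generated by formal symbols $(i=0),(i=1)$, $i\in I$, subject to $(i=0)\wedge(i=1)=0_{\mathbb F}$); there is a canonical lattice map $\mathbb I\to\mathbb F$, $r\mapsto (r=1)$, and $(r=0):=((1-r)=1)$. For $\varphi:\mathbb{F}$, $[\varphi]$ is the associated subsingleton type; when inhabited its unique element is written $\star$. $\Rightarrow$ denotes implication of propositions. A dependent type $A$ over a type $\Gamma$ is a family of types $A\rho$ indexed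 by $\rho:\Gamma$. A path $\gamma:\Gamma^{\mathbb I}$ is constant on $\varphi$ if $\varphi\Rightarrow \forall(i:\mathbb I).\,\gamma(0)=\gamma(i)$. A fibrancy structure on a type $X$ is an operation $h$ taking $\varphi:\mathbb F$, $u:[\varphi]\to X^{\mathbb I}$ and $u_0:X$ with $\varphi\Rightarrow u\,\star\,0=u_0$, producing $h\,\varphi\,u\,u_0:X$ with $\varphi\Rightarrow u\,\star\,1=h\,\varphi\,u\,u_0$. A homogeneous composition structure on $A$ is an element $h_A$ of $\Pi(\rho:\Gamma)$(fibrancy structures on $A\rho$); we write $h_A\,\rho\,\varphi\,u\,u_0$. A composition structure $c_A$ on $A$ is an operation taking $\gamma:\Gamma^{\mathbb I}$, $\varphi:\mathbb F$, $u:[\varphi]\to\Pi(i:\mathbb I)A\gamma(i)$ and $u_0:A\gamma(0)$ with $\varphi\Rightarrow u\,\star\,0=u_0$, and producing $c_A\,\gamma\,\varphi\,u\,u_0 : A\gamma(1)$ such that $\varphi\Rightarrow u\,\star\,1 = c_A\,\gamma\,\varphi\,u\,u_0$. A transport structure $t_A$ on $A$ is an operation taking $\gamma:\Gamma^{\mathbb I}$, $\varphi:\mathbb F$ such that $\gamma$ is constant on $\varphi$, and $u_0:A\gamma(0)$, and producing $t_A\,\gamma\,\varphi\,u_0:A\gamma(1)$ such that $\varphi\Rightarrow u_0 = t_A\,\gamma\,\varphi\,u_0$. *)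

(* Abstract axiomatisation of the relevant part of the internal
   type theory of the cubical presheaf topos. *)

Class Cube := {
  I : Type;
  i0 : I; i1 : I;
  imeet : I -> I -> I; ijoin : I -> I -> I; inv : I -> I;
  imeet_assoc : forall a b c, imeet a (imeet b c) = imeet (imeet a b) c;
  ijoin_assoc : forall a b c, ijoin a (ijoin b c) = ijoin (ijoin a b) c;
  imeet_comm : forall a b, imeet a b = imeet b a;
  ijoin_comm : forall a b, ijoin a b = ijoin b a;
  imeet_absorb : forall a b, imeet a (ijoin a b) = a;
  ijoin_absorb : forall a b, ijoin a (imeet a b) = a;
  imeet_distr : forall a b c, imeet a (ijoin b c) = ijoin (imeet a b) (imeet a c);
  ijoin_distr : forall a b c, ijoin a (imeet b c) = imeet (ijoin a b) (ijoin a c);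
  ijoin_0r : forall a, ijoin a i0 = a;
  imeet_1r : forall a, imeet a i1 = a;
  ijoin_1r : forall a, ijoin a i1 = i1;
  imeet_0r : forall a, imeet a i0 = i0;
  inv_inv : forall a, inv (inv a) = a;
  inv_meet : forall a b, inv (imeet a b) = ijoin (inv a) (inv b);
  inv_0 : inv i0 = i1;
  (* cofibrant propositions: a distributive lattice *)
  F : Type;
  F0 : F; F1 : F;
  Fmeet : F -> F -> F; Fjoin : F -> F -> F;
  Fmeet_assoc : forall a b c, Fmeet a (Fmeet b c) = Fmeet (Fmeet a b) c;
  Fjoin_assoc : forall a b c, Fjoin a (Fjoin b c) = Fjoin (Fjoin a b) c;
  Fmeet_comm : forall a b, Fmeet a b = Fmeet b a;
  Fjoin_comm : forall a b, Fjoin a b = Fjoin b a;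
  Fmeet_absorb : forall a b, Fmeet a (Fjoin a b) = a;
  Fjoin_absorb : forall a b, Fjoin a (Fmeet a b) = a;
  Fmeet_distr : forall a b c, Fmeet a (Fjoin b c) = Fjoin (Fmeet a b) (Fmeet a c);
  Fjoin_0r : forall a, Fjoin a F0 = a;
  Fmeet_1r : forall a, Fmeet a F1 = a;
  (* the subsingleton [phi] associated to phi : F *)
  holds : F -> Prop;
  holds_F0 : ~ holds F0;
  holds_F1 : holds F1;
  holds_meet : forall a b, holds (Fmeet a b) <-> holds a /\ holds b;
  holds_join : forall a b, holds (Fjoin a b) <-> holds a \/ holds b;
  eq1 : I -> F;
  eq1_0 : eq1 i0 = F0;
  eq1_1 : eq1 i1 = F1;
  eq1_meet : forall a b, eq1 (imeet a b) = Fmeet (eq1 a) (eq1 b);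
  eq1_join : forall a b, eq1 (ijoin a b) = Fjoin (eq1 a) (eq1 b);
  holds_eq1 : forall r, holds (eq1 r) <-> r = i1
}.

Definition fib_op {C : Cube} (X : Type) : Type :=
  forall (phi : F) (u : holds phi -> I -> X) (u0 : X),
    (forall x : holds phi, u x i0 = u0) -> X.

Definition is_fib {C : Cube} (X : Type) (h : fib_op X) : Prop :=
  forall (phi : F) (u : holds phi -> I -> X) (u0 : X)
         (H : forall x : holds phi, u x i0 = u0) (x : holds phi),
    u x i1 = h phi u u0 H.

Definition fibrancy_structure {C : Cube} (X : Type) : Type :=
  { h : fib_op X | is_fib X h }.

Definition hcomp_structure {C : Cube} {Gamma : Type} (A : Gamma -> Type) : Type :=
  forall rho : Gamma, fibrancy_structure (A rho).

Definition comp_op {C : Cube} {Gamma : Type} (A : Gamma -> Type) : Type :=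
  forall (gamma : I -> Gamma) (phi : F)
         (u : holds phi -> forall i : I, A (gamma i)) (u0 : A (gamma i0)),
    (forall x : holds phi, u x i0 = u0) -> A (gamma i1).

Definition is_comp {C : Cube} {Gamma : Type} (A : Gamma -> Type) (c : comp_op A) : Prop :=
  forall (gamma : I -> Gamma) (phi : F)
         (u : holds phi -> forall i : I, A (gamma i)) (u0 : A (gamma i0))
         (H : forall x : holds phi, u x i0 = u0) (x : holds phi),
    u x i1 = c gamma phi u u0 H.

Definition comp_structure {C : Cube} {Gamma : Type} (A : Gamma -> Type) : Type :=
  { c : comp_op A | is_comp A c }.

Definition constant_on {C : Cube} {Gamma : Type} (gamma : I -> Gamma) (phi : F) : Prop :=
  holds phi -> forall i : I, gamma i0 = gamma i.

Definition trans_op {C : Cube} {Gamma : Type} (A : Gamma -> Type) : Type :=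
  forall (gamma : I -> Gamma) (phi : F),
    constant_on gamma phi -> A (gamma i0) -> A (gamma i1).

(* the condition  phi => u0 = t gamma phi u0 ; under phi, gamma 0 = gamma 1,
   so u0 is transported along that (propositional) equality *)
Definition is_trans {C : Cube} {Gamma : Type} (A : Gamma -> Type) (t : trans_op A) : Prop :=
  forall (gamma : I -> Gamma) (phi : F) (H : constant_on gamma phi)
         (u0 : A (gamma i0)) (x : holds phi),
    eq_rect (gamma i0) A u0 (gamma i1) (H x i1) = t gamma phi H u0.

Definition trans_structure {C : Cube} {Gamma : Type} (A : Gamma -> Type) : Type :=
  { t : trans_op A | is_trans A t }.

Definition castI {C : Cube} {Gamma : Type} (A : Gamma -> Type) (gamma : I -> Gamma)
  {a b : I} (e : a = b) (x : A (gamma a)) : A (gamma b) :=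
  eq_rect a (fun k => A (gamma k)) x b e.

Lemma const_join {C : Cube} {Gamma : Type} (gamma : I -> Gamma) (i : I) :
  constant_on (fun j => gamma (ijoin i j)) (eq1 i).
Proof.
  intros Hx j. apply holds_eq1 in Hx. subst i.
  rewrite (ijoin_comm i1 i0), (ijoin_comm i1 j), !ijoin_1r. reflexivity.
Qed.

Lemma const_F0 {C : Cube} {Gamma : Type} (gamma : I -> Gamma) :
  constant_on gamma F0.
Proof. intros Hx. exfalso. exact (holds_F0 Hx). Qed.

From Stdlib Require Import ProofIrrelevance FunctionalExtensionality.

(* Given a path gamma in Gamma, a partial tube u over phi and a base u0, we
   first move everything into the single fibre A (gamma 1):
   - the base u0 is transported along gamma with the empty face 0_F;
   - the point u x i of the tube is transported along gamma'(i) = gamma (i \/ -),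
     which is constant on (i = 1), so the transport is the identity at i = 1.
   At i = 0 the path gamma'(0) is gamma itself and (0 = 1) is 0_F, so the
   transported tube meets the transported base (lemma [lift_tube_i0]); at i = 1
   the transported tube is the original tube (lemma [lift_tube_i1]).  Hence the
   homogeneous composition in A (gamma 1) of the transported data is a
   composition structure, and it agrees with u x 1 on phi. *)

Section Composition.
Context {C : Cube} {Gamma : Type} (A : Gamma -> Type).

Lemma castI_as_eq_rect (gamma : I -> Gamma) (a b : I) (e : a = b) (x : A (gamma a)) :
  castI A gamma e x = eq_rect _ A x _ (f_equal gamma e).
Proof. destruct e; reflexivity. Qed.

Lemma eq_rect_proof_irrelevant (a b : Gamma) (e1 e2 : a = b) (x : A a) :
  eq_rect a A x b e1 = eq_rect a A x b e2.
Proof. rewrite (proof_irrelevance _ e1 e2); reflexivity. Qed.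

Lemma eq_rect_trans (a b c : Gamma) (e1 : a = b) (e2 : b = c) (x : A a) :
  eq_rect b A (eq_rect a A x b e1) c e2 = eq_rect a A x c (eq_trans e1 e2).
Proof. destruct e2; reflexivity. Qed.

Lemma trans_op_path_invariant (t : trans_op A) (g1 g2 : I -> Gamma) (e : g1 = g2)
  (p1 p2 : F) (ep : p1 = p2) (H1 : constant_on g1 p1) (H2 : constant_on g2 p2)
  (v : A (g1 i0)) :
  t g2 p2 H2 (eq_rect _ A v _ (f_equal (fun g => g i0) e))
  = eq_rect _ A (t g1 p1 H1 v) _ (f_equal (fun g => g i1) e).
Proof. destruct e, ep; simpl. rewrite (proof_irrelevance _ H1 H2). reflexivity. Qed.

Definition lift_tube (t : trans_op A) (gamma : I -> Gamma)
  (v : forall i : I, A (gamma i)) (i : I) : A (gamma i1) :=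
  castI A gamma (ijoin_1r i)
    (t (fun j => gamma (ijoin i j)) (eq1 i) (const_join gamma i)
       (castI A gamma (eq_sym (ijoin_0r i)) (v i))).

Definition lift_base (t : trans_op A) (gamma : I -> Gamma) (u0 : A (gamma i0)) :
  A (gamma i1) :=
  t gamma F0 (const_F0 gamma) u0.

(* At i = 0 the transported tube starts at the transported base, since
   gamma'(0) = gamma and (0 = 1) = 0_F. *)
Lemma lift_tube_i0 (t : trans_op A) (gamma : I -> Gamma) (v : forall i, A (gamma i)) :
  lift_tube t gamma v i0 = lift_base t gamma (v i0).
Proof.
  unfold lift_tube, lift_base. rewrite !castI_as_eq_rect.
  assert (gamma_eq : gamma = (fun j => gamma (ijoin i0 j))).
  { apply functional_extensionality; intro j.
    rewrite ijoin_comm, ijoin_0r; reflexivity. }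
  rewrite (eq_rect_proof_irrelevant _ _ (f_equal gamma (eq_sym (ijoin_0r i0)))
             (f_equal (fun g => g i0) gamma_eq)).
  rewrite (trans_op_path_invariant t gamma _ gamma_eq F0 (eq1 i0) (eq_sym eq1_0)
             (const_F0 gamma)).
  rewrite eq_rect_trans. apply (eq_rect_proof_irrelevant _ _ _ eq_refl).
Qed.

(* At i = 1 the path gamma'(1) is constant on the true face (1 = 1), so a
   transport structure acts as the identity and the tube is unchanged. *)
Lemma lift_tube_i1 (tA : trans_structure A) (gamma : I -> Gamma)
  (v : forall i, A (gamma i)) :
  lift_tube (proj1_sig tA) gamma v i1 = v i1.
Proof.
  unfold lift_tube.
  rewrite <- (proj2_sig tA _ _ _ _ (proj2 (holds_eq1 i1) eq_refl)).
  rewrite !castI_as_eq_rect, !eq_rect_trans.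
  apply (eq_rect_proof_irrelevant _ _ _ eq_refl).
Qed.

Lemma lift_tube_compatible (t : trans_op A) (gamma : I -> Gamma) (phi : F)
  (u : holds phi -> forall i : I, A (gamma i)) (u0 : A (gamma i0))
  (H : forall x : holds phi, u x i0 = u0) :
  forall x : holds phi, lift_tube t gamma (u x) i0 = lift_base t gamma u0.
Proof. intro x. rewrite lift_tube_i0, (H x). reflexivity. Qed.

Definition comp_of_hcomp_trans (hA : hcomp_structure A) (tA : trans_structure A) :
  comp_op A :=
  fun gamma phi u u0 H =>
    proj1_sig (hA (gamma i1)) phi
      (fun x => lift_tube (proj1_sig tA) gamma (u x))
      (lift_base (proj1_sig tA) gamma u0)
      (lift_tube_compatible (proj1_sig tA) gamma phi u u0 H).

Lemma comp_of_hcomp_trans_is_comp (hA : hcomp_structure A) (tA : trans_structure A) :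
  is_comp A (comp_of_hcomp_trans hA tA).
Proof.
  intros gamma phi u u0 H x. unfold comp_of_hcomp_trans.
  rewrite <- (proj2_sig (hA (gamma i1)) _ _ _ _ x).
  symmetry. apply lift_tube_i1.
Qed.

End Composition.

Theorem mainTheorem2 (C : Cube) (Gamma : Type) (A : Gamma -> Type)
  (hA : hcomp_structure A) (tA : trans_structure A) :
  exists cA : comp_structure A,
    forall (gamma : I -> Gamma) (phi : F)
           (u : holds phi -> forall i : I, A (gamma i)) (u0 : A (gamma i0))
           (H : forall x : holds phi, u x i0 = u0),
      exists H' : (forall x : holds phi,
          castI A gamma (ijoin_1r i0)
            (proj1_sig tA (fun j => gamma (ijoin i0 j)) (eq1 i0) (const_join gamma i0)
               (castI A gamma (eq_sym (ijoin_0r i0)) (u x i0)))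
          = proj1_sig tA gamma F0 (const_F0 gamma) u0),
        proj1_sig cA gamma phi u u0 H
        = proj1_sig (hA (gamma i1)) phi
            (fun (x : holds phi) (i : I) =>
               castI A gamma (ijoin_1r i)
                 (proj1_sig tA (fun j => gamma (ijoin i j)) (eq1 i) (const_join gamma i)
                    (castI A gamma (eq_sym (ijoin_0r i)) (u x i))))
            (proj1_sig tA gamma F0 (const_F0 gamma) u0)
            H'.
Proof.
  exists (exist _ (comp_of_hcomp_trans A hA tA) (comp_of_hcomp_trans_is_comp A hA tA)).
  intros gamma phi u u0 H.
  exists (lift_tube_compatible A (proj1_sig tA) gamma phi u u0 H).
  reflexivity.
Qed.
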